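(* Let $G=(V,E)$ be a finite graph, let $\lambda>0$, and let $(S_v : v\in V)$ be nonempty finite lists of colors. An $S$-coloring is a map $\sigma$ on $V$ with $\sigma(v)\in S_v$ for all $v$ and $\sigma(u)\neq\sigma(v)$ for all $uv\in E$; identify it with the set $\{(v,\sigma(v)):v\in V\}$. (1) If $|S_v|\ge(1+\lambda)d(v)$ for all $v\in V$, then there is a random $S$-coloring $\sigma$ of $G$ such that for every set $T=\{(u_1,\gamma_1),\dots,(u_k,\gamma_k)\}$ of vertex-color pairs with distinct $u_i$, $$\mathbb{P}(\sigma(u_1)=\gamma_1,\dots,\sigma(u_k)=\gamma_k)\le\prod_{i=1}^k\frac{1}{\lambda d(u_i)},$$ where a factor with $d(u_i)=0$ is interpreted as $+\infty$. (2) If $|S_v|\ge(1+\lambda)\Delta_G$ for all $v\in V$, then there is a random $S$-coloring $\sigma$ of $G$ which is $\frac{1}{\lambda\Delta_G}$-spread, i.e. for every set $T$ of vertex-color pairs, $\mathbb{P}(\sigma\supseteq T)\le(\lambda\Delta_G)^{-|T|}$.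
   Context: $d(v)$ is the degree of $v$ in $G$ and $\Delta_G$ the maximum degree of $G$. A random set $S$ is $p$-spread if $\mathbb{P}(S\supseteq T)\le p^{|T|}$ for all sets $T$. *)

From mathcomp Require Import all_boot all_order all_algebra.
From mathcomp Require Import reals.
Set Implicit Arguments. Unset Strict Implicit. Unset Printing Implicit Defensive.
Import Order.TTheory GRing.Theory Num.Theory.
Local Open Scope ring_scope.

Section Defs.
Variables (V C : finType).

Definition deg (e : rel V) (v : V) : nat := #|[set u | e v u]|.

Definition maxdeg (e : rel V) : nat := (\max_(v : V) deg e v)%N.

Definition is_S_coloring (e : rel V) (S : V -> {set C}) (s : {ffun V -> C}) : Prop :=
  (forall v, s v \in S v) /\ (forall u v, e u v -> s u != s v).

Definition coloring_set (s : {ffun V -> C}) : {set V * C} := [set (v, s v) | v : V].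

Variable R : realType.

Definition is_distr (p : {ffun V -> C} -> R) : Prop :=
  (forall s, 0 <= p s) /\ \sum_s p s = 1.

Definition random_S_coloring (e : rel V) (S : V -> {set C}) (p : {ffun V -> C} -> R) : Prop :=
  is_distr p /\ (forall s, p s != 0 -> is_S_coloring e S s).

Definition prob_contains (p : {ffun V -> C} -> R) (T : {set V * C}) : R :=
  \sum_(s | T \subset coloring_set s) p s.

Definition spread (p : {ffun V -> C} -> R) (q : R) : Prop :=
  forall T : {set V * C}, prob_contains p T <= q ^+ #|T|.

End Defs.

From mathcomp Require Import all_boot all_order all_algebra.
From mathcomp Require Import reals.
Import Order.TTheory GRing.Theory Num.Theory.
Set Implicit Arguments. Unset Strict Implicit. Unset Printing Implicit Defensive.

(* Take sigma uniform among all S-colorings. In a coloring containing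
   (u, g) |: T, vertex u can be recolored with any of the at least
   |S u| - d(u) colors unused by its neighbours, and the result still contains
   T; since these recolorings are injective, each pair added to T divides the
   number of colorings containing it by at least |S u| - d(u). Hence
   P(sigma ⊇ T) <= prod_(u in T) 1 / (|S u| - d(u)), and the hypotheses give
   |S u| - d(u) >= lambda d(u) (resp. >= lambda Delta). Greedy recoloring also
   shows that S-colorings exist. *)

Section Recoloring.
Variables (V C : finType) (e : rel V) (S : V -> {set C}).
Hypotheses (e_sym : symmetric e) (e_irr : irreflexive e).

Definition proper_on (A : {set V}) (s : {ffun V -> C}) : bool :=
  [forall v, s v \in S v] && [forall u in A, forall v in A, e u v ==> (s u != s v)].

Definition colorings : {set {ffun V -> C}} := [set s | proper_on [set: V] s].

Definition colorings_containing (T : {set V * C}) : {set {ffun V -> C}} :=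
  [set s in colorings | T \subset coloring_set s].

Definition recolor (s : {ffun V -> C}) (x : V) (c : C) : {ffun V -> C} :=
  [ffun w => if w == x then c else s w].

Definition free_colors (s : {ffun V -> C}) (x : V) : {set C} :=
  S x :\: [set s w | w in [set w | e x w]].

Lemma in_coloringsP (s : {ffun V -> C}) :
  reflect (is_S_coloring e S s) (s \in colorings).
Proof.
rewrite inE; apply: (iffP andP) => [[/forallP inS /forall_inP sE]|[inS sE]].
  split=> // u v euv; have /forall_inP/(_ v (in_setT v)) := sE u (in_setT u).
  by move/implyP; apply.
split; first exact/forallP.
by apply/forall_inP=> u _; apply/forall_inP=> v _; apply/implyP/sE.
Qed.

Lemma subset_coloring_setP (T : {set V * C}) (s : {ffun V -> C}) :
  reflect (forall t, t \in T -> s t.1 = t.2) (T \subset coloring_set s).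
Proof.
apply: (iffP subsetP) => [sT t /sT /imsetP[w _ ->] //|sT [v c] /sT /= <-].
exact: imset_f.
Qed.

Lemma card_free_colors (s : {ffun V -> C}) (x : V) :
  (#|S x| - deg e x <= #|free_colors s x|)%N.
Proof.
rewrite cardsD leq_sub2l // (leq_trans (subset_leq_card (subsetIr _ _))) //.
exact: leq_imset_card.
Qed.

Lemma proper_on_recolor (A : {set V}) (s : {ffun V -> C}) (x : V) (c : C) :
  proper_on A s -> c \in free_colors s x -> proper_on (x |: A) (recolor s x c).
Proof.
case/andP=> /forallP inS /forall_inP sE; rewrite inE => /andP[cN cS].
have c_neq w : e x w -> c != s w.
  by move=> exw; apply: contraNneq cN => ->; apply: imset_f; rewrite inE.
apply/andP; split.
  by apply/forallP=> v; rewrite ffunE; case: eqP => [->|].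
apply/forall_inP=> u uA; apply/forall_inP=> v vA; apply/implyP=> euv.
rewrite !ffunE; case: (eqVneq u x) => [ux|ux]; case: (eqVneq v x) => [vx|vx].
- by rewrite ux vx e_irr in euv.
- by apply: c_neq; rewrite -ux.
- by rewrite eq_sym; apply: c_neq; rewrite -vx e_sym.
move: uA vA; rewrite !in_setU1 (negbTE ux) (negbTE vx) /= => uA vA.
by have /forall_inP/(_ v vA)/implyP := sE u uA; apply.
Qed.

Lemma recolor_colorings (s : {ffun V -> C}) (x : V) (c : C) :
  s \in colorings -> c \in free_colors s x -> recolor s x c \in colorings.
Proof.
rewrite [_ \in colorings]inE => sP cF.
by rewrite inE -(setUT [set x]) proper_on_recolor.
Qed.

Lemma colorings_exist : (forall v, deg e v < #|S v|)%N -> colorings != set0.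
Proof.
move=> deg_lt; have S_ne v : S v != set0.
  by rewrite -card_gt0 (leq_ltn_trans _ (deg_lt v)).
have free_ne s x : free_colors s x != set0.
  by rewrite -card_gt0 (leq_trans _ (card_free_colors s x)) // subn_gt0.
suff [s]: exists s, proper_on [set:: enum [set: V]] s.
  by rewrite set_enum => sP; apply/set0Pn; exists s; rewrite inE.
elim: (enum _) => [|x l [s sl]].
  exists [ffun v => xchoose (set0Pn _ (S_ne v))]; rewrite set_nil; apply/andP; split.
    by apply/forallP=> v; rewrite ffunE; apply: xchooseP.
  by apply/forall_inP=> u; rewrite in_set0.
have [c cF] := set0Pn _ (free_ne s x).
by exists (recolor s x c); rewrite set_cons; apply: proper_on_recolor.
Qed.

(* Recoloring is injective on pairs (coloring, free color) because every
   coloring in the domain gives [u] the same color [g]. *)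
Lemma card_colorings_containing_setU1 (T : {set V * C}) (u : V) (g : C) :
  (forall t, t \in T -> t.1 != u) ->
  (#|colorings_containing ((u, g) |: T)| * (#|S u| - deg e u)
     <= #|colorings_containing T|)%N.
Proof.
move=> Tu; set B := colorings_containing _.
have B_col s : s \in B -> s \in colorings /\ s u = g /\ forall t, t \in T -> s t.1 = t.2.
  rewrite inE => /andP[sC /subset_coloring_setP sT].
  split=> //; split=> [|t tT]; [apply: (sT (u, g)) | apply: sT].
    by rewrite !inE eqxx.
  by rewrite !inE tT orbT.
clearbody B; pose P := [set sc | (sc.1 \in B) && (sc.2 \in free_colors sc.1 u)].
have cardP : (\sum_(s in B) #|free_colors s u|)%N = #|P|.
  by under eq_bigr do rewrite -sum1_card; rewrite pair_big_dep sum1dep_card.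
have recolor_inj : {in P &, injective (fun sc => recolor sc.1 u sc.2)}.
  move=> [s c] [s' c']; rewrite !inE /=.
  move=> /andP[/B_col[_ [su _]] _] /andP[/B_col[_ [s'u _]] _].
  move=> /= /ffunP eq_rec; have := eq_rec u; rewrite !ffunE eqxx => <-; congr (_, _).
  apply/ffunP=> w; have := eq_rec w; rewrite !ffunE.
  by case: eqP => [->|//]; rewrite su s'u.
rewrite -sum_nat_const (@leq_trans #|P|) //.
  by rewrite -cardP leq_sum // => s _; apply: card_free_colors.
rewrite -(card_in_imset recolor_inj) subset_leq_card //.
apply/subsetP=> _ /imsetP[[s c] + ->]; rewrite inE /= => /andP[/B_col[sC [_ sT]] cF].
rewrite inE recolor_colorings //=; apply/subset_coloring_setP => t tT.
by rewrite ffunE (negbTE (Tu t tT)) sT.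
Qed.

Lemma colorings_containing_conflict (T : {set V * C}) (t t' : V * C) :
  t \in T -> t' \in T -> t.1 = t'.1 -> t != t' -> colorings_containing T = set0.
Proof.
move=> tT t'T tt' /eqP neq; apply/setP=> s; rewrite !inE.
apply/negbTE/andP=> [[_ /subset_coloring_setP sT]]; apply: neq.
by rewrite [t]surjective_pairing [t']surjective_pairing -sT // tt' sT.
Qed.

Lemma card_colorings_containing (T : {set V * C}) :
  (#|colorings_containing T| * \prod_(t in T) (#|S t.1| - deg e t.1) <= #|colorings|)%N.
Proof.
elim: {T}_.+1 {-2}T (ltnSn #|T|) => // n IH T.
have [-> _|[t tT] ltTn] := set_0Vmem T.
  rewrite big_set0 muln1 subset_leq_card //.
  by apply/subsetP=> s; rewrite inE => /andP[].
case: (boolP [exists t' in T :\ t, t'.1 == t.1]) => [/exists_inP[t' t'T /eqP t't]|].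
  move: t'T; rewrite in_setD1 => /andP[t't_neq t'T].
  by rewrite (colorings_containing_conflict t'T tT t't t't_neq) cards0.
move=> /exists_inPn Tt; rewrite (big_setD1 t tT) /= mulnA.
apply: leq_trans (IH (T :\ t) _); last by rewrite (cardsD1 t) tT in ltTn.
rewrite leq_mul2r; apply/orP; right.
have := card_colorings_containing_setU1 t.2 Tt.
by rewrite -surjective_pairing setD1K.
Qed.

Variable R : realType.
Local Open Scope ring_scope.

Definition uniform_coloring (s : {ffun V -> C}) : R :=
  (s \in colorings)%:R / #|colorings|%:R.

Lemma prob_contains_uniform (T : {set V * C}) :
  prob_contains uniform_coloring T = #|colorings_containing T|%:R / #|colorings|%:R.
Proof.
rewrite /prob_contains -mulr_suml -natr_sum; congr (_%:R / _).
rewrite -sum1_card big_mkcond [in RHS]big_mkcond; apply: eq_bigr => s _.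
by rewrite [_ \in colorings_containing _]inE andbC; case: (T \subset _); case: (_ \in _).
Qed.

Lemma uniform_coloring_random :
  colorings != set0 -> random_S_coloring e S uniform_coloring.
Proof.
move=> col_ne; split; first split.
- by move=> s; rewrite divr_ge0.
- have := prob_contains_uniform set0.
  rewrite /prob_contains (eq_bigl predT) => [->|s]; last by rewrite sub0set.
  have -> : colorings_containing set0 = colorings.
    by apply/setP=> s; rewrite inE sub0set andbT.
  by rewrite divff // pnatr_eq0 -lt0n card_gt0.
- move=> s; rewrite /uniform_coloring.
  by case: (boolP (s \in colorings)) => [/in_coloringsP //|]; rewrite mul0r eqxx.
Qed.

Lemma prob_contains_uniform_le (T : {set V * C}) (q : V * C -> R) :
  colorings != set0 ->
  (forall t, t \in T -> 0 < q t <= (#|S t.1| - deg e t.1)%N%:R) ->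
  prob_contains uniform_coloring T <= \prod_(t in T) (q t)^-1.
Proof.
move=> col_ne qT; have q_gt0 : 0 < \prod_(t in T) q t.
  by apply: prodr_gt0 => t /qT /andP[].
rewrite prob_contains_uniform prodfV ler_pdivrMr ?ltr0n ?card_gt0 //.
rewrite ler_pdivlMl // mulrC.
pose free_prod := \prod_(t in T) (#|S t.1| - deg e t.1)%N%:R : R.
apply: (le_trans (y := #|colorings_containing T|%:R * free_prod)).
  by rewrite ler_wpM2l // ler_prod // => t /qT /andP[/ltW -> ->].
by rewrite /free_prod -natr_prod -natrM ler_nat card_colorings_containing.
Qed.

End Recoloring.

Section ListSizeBounds.
Local Open Scope ring_scope.
Variables (R : realType) (lambda : R).
Hypothesis lambda_gt0 : 0 < lambda.

Lemma deg_lt_card_of_bound (d D n : nat) :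
  (d <= D)%N -> (0 < n)%N -> (1 + lambda) * D%:R <= n%:R -> (d < n)%N.
Proof.
move=> dD n_gt0 bound; case: (posnP d) => [-> //|d_gt0].
have D_gt0 : (0 < D)%N := leq_trans d_gt0 dD.
rewrite -(ltr_nat R) (@le_lt_trans _ _ D%:R) ?ler_nat // (lt_le_trans _ bound) //.
by rewrite mulrDl mul1r ltrDl mulr_gt0 ?ltr0n.
Qed.

Lemma scaled_le_card_subn (d D n : nat) :
  (d <= D)%N -> (1 + lambda) * D%:R <= n%:R -> lambda * D%:R <= (n - d)%N%:R.
Proof.
move=> dD bound; have dn : (d <= n)%N.
  rewrite -(ler_nat R) (le_trans _ bound) // (@le_trans _ _ D%:R) ?ler_nat //.
  by rewrite mulrDl mul1r lerDl mulr_ge0 ?ler0n ?(ltW lambda_gt0).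
rewrite natrB // lerBrDr (le_trans _ bound) // mulrDl mul1r addrC lerD2r.
by rewrite ler_nat.
Qed.

End ListSizeBounds.

Local Open Scope ring_scope.

Theorem proposition4p1 (R : realType) (V C : finType) (e : rel V)
    (e_sym : symmetric e) (e_irr : irreflexive e)
    (lambda : R) (lambda_gt0 : 0 < lambda)
    (S : V -> {set C}) (S_ne : forall v, S v != set0) :
  ((forall v, (1 + lambda) * (deg e v)%:R <= (#|S v|)%:R) ->
     exists p : {ffun V -> C} -> R, random_S_coloring e S p /\
       forall T : {set V * C},
         {in T &, forall t t', t.1 = t'.1 -> t = t'} ->
         (forall t, t \in T -> (0 < deg e t.1)%N) ->
         prob_contains p T <= \prod_(t in T) (lambda * (deg e t.1)%:R)^-1)
  /\
  ((forall v, (1 + lambda) * (maxdeg e)%:R <= (#|S v|)%:R) ->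
     exists p : {ffun V -> C} -> R, random_S_coloring e S p /\
       ((0 < maxdeg e)%N -> spread p (lambda * (maxdeg e)%:R)^-1)).
Proof.
have S_gt0 v : (0 < #|S v|)%N by rewrite card_gt0.
split=> bound.
- have col_ne : colorings e S != set0.
    apply: (colorings_exist e_sym e_irr) => v.
    exact: (deg_lt_card_of_bound lambda_gt0 (leqnn _) (S_gt0 v) (bound v)).
  exists (uniform_coloring e S R); split; first exact: uniform_coloring_random.
  move=> T _ T_gt0; apply: (prob_contains_uniform_le e_sym e_irr col_ne) => t tT.
  by rewrite mulr_gt0 ?ltr0n ?T_gt0 //= scaled_le_card_subn.
- have deg_le v : (deg e v <= maxdeg e)%N by apply: leq_bigmax.
  have col_ne : colorings e S != set0.
    apply: (colorings_exist e_sym e_irr) => v.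
    exact: (deg_lt_card_of_bound lambda_gt0 (deg_le v) (S_gt0 v) (bound v)).
  exists (uniform_coloring e S R); split; first exact: uniform_coloring_random.
  move=> D_gt0 T; rewrite -prodr_const.
  apply: (prob_contains_uniform_le e_sym e_irr col_ne) => t _.
  by rewrite mulr_gt0 ?ltr0n //= scaled_le_card_subn.
Qed.
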